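(* Let $d\in\mathbf{N}$, let $A$ be a symmetric $(d+1)\times(d+1)$ matrix with rational entries, let $\Delta_d=\{x\in\mathbf{R}^{d+1}: \sum_{i=1}^{d+1}x_i=1,\ x_i\ge0\ \forall i\}$ with relative interior $\Delta_d^o=\{x\in\Delta_d: x_i>0\ \forall i\}$, and define $f:\Delta_d\to\mathbf{R}$ by $f(x)=\frac12x^TAx$. (a) $f$ attains its maximum and its minimum on $\Delta_d$ at points whose entries are all rational. (b) If there is $x\in\Delta_d^o$ with $f(x)=M:=\max_{\Delta_d}f$, then there is $x'\in\Delta_d^o$ with all entries rational and $f(x')=M$. The same holds with the maximum replaced by the minimum. *)

From HB Require Import structures.
From mathcomp Require Import all_boot all_order all_algebra.
From mathcomp Require Import reals.
Set Implicit Arguments. Unset Strict Implicit. Unset Printing Implicit Defensive.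
Import Order.TTheory GRing.Theory Num.Theory.
Local Open Scope ring_scope.

Definition in_simplex (R : realType) (d : nat) (x : 'rV[R]_(d.+1)) : Prop :=
  (\sum_(i < d.+1) x 0 i = 1) /\ (forall i, 0 <= x 0 i).

Definition in_simplex_int (R : realType) (d : nat) (x : 'rV[R]_(d.+1)) : Prop :=
  (\sum_(i < d.+1) x 0 i = 1) /\ (forall i, 0 < x 0 i).

Definition qf (R : realType) (d : nat) (A : 'M[rat]_(d.+1)) (x : 'rV[R]_(d.+1)) : R :=
  2^-1 * (x *m map_mx (@ratr R) A *m x^T) 0 0.

Definition ratpt (R : realType) (d : nat) (q : 'rV[rat]_(d.+1)) : 'rV[R]_(d.+1) :=
  map_mx (@ratr R) q.

From HB Require Import structures.
From mathcomp Require Import all_boot all_order all_algebra.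
From mathcomp Require Import reals ring lra.
From Stdlib Require Import Classical.
Import Order.TTheory GRing.Theory Num.Theory.
Local Open Scope ring_scope.
Set Implicit Arguments. Unset Strict Implicit. Unset Printing Implicit Defensive.

(* On a face S of the simplex, either [qform] is negative definite on the tangent space of S,
   and then it has a unique critical point on the affine hull of S, the solution of a linear
   system with rational coefficients; or some nonzero tangent direction has [qform v >= 0],
   and moving along +-v does not decrease the form until a smaller face is reached.  Following
   the critical point or the direction down the faces, every point of the simplex is dominated
   by one of finitely many rational critical points, the best of which is a rational maximizer.
   An interior maximizer forces [qform] to be concave on the hyperplane, so maximizers are
   closed under midpoints; starting the descent at it yields, for each coordinate, a rational
   maximizer positive at that coordinate, and iterated midpoints of these are interior.
   Minima are maxima for [- A]. *)

Lemma quadratic_nonpos_near0 (R : realFieldType) (b q t : R) : 0 < t ->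
  (forall s, `|s| <= t -> 2 * s * b + s ^+ 2 * q <= 0) -> b = 0 /\ q <= 0.
Proof.
move=> t0 h.
have q0 : q <= 0.
  have := h t; have := h (- t); rewrite normrN gtr0_norm // lexx sqrrN.
  move=> /(_ isT) h1 /(_ isT) h2; have t2 : 0 < t ^+ 2 by rewrite exprn_gt0.
  rewrite -(pmulr_rle0 _ t2); lra.
split => //; apply/eqP; apply: contraT => b0.
pose s := Num.min t (`|b| / (1 - q)).
have s0 : 0 < s by rewrite lt_min t0 divr_gt0 ?normr_gt0 //; lra.
have sb : s * (1 - q) <= `|b| by rewrite -ler_pdivlMr ?ge_min ?lexx ?orbT //; lra.
have st : `|s| <= t by rewrite gtr0_norm // ge_min lexx.
have := h s st; have := h (- s); rewrite normrN => /(_ st).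
have [b_ge0|b_lt0] := leP 0 b; [rewrite ger0_norm // in sb | rewrite ltr0_norm // in sb];
  nra.
Qed.

(* [x *m kkt_mx M S k = delta_mx 0 k] says that the coordinates of [x] sum to 1 (column k),
   that [x] vanishes off S (columns outside S), and that [(x *m M) 0 c = (x *m M) 0 k] for
   c in S: [x] is a critical point of [x *m M *m x^T] on the affine hull of the face S. *)
Definition kkt_mx (F : fieldType) (n : nat) (M : 'M[F]_n) (S : {set 'I_n}) (k : 'I_n) :
    'M[F]_n :=
  \matrix_(r, c) if c == k then 1 else if c \in S then M r c - M r k else (r == c)%:R.

Definition kkt_point (F : fieldType) (n : nat) (M : 'M[F]_n) (S : {set 'I_n}) (k : 'I_n) :
    'rV[F]_n :=
  delta_mx 0 k *m invmx (kkt_mx M S k).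

Lemma kkt_mxE (F : fieldType) n (M : 'M[F]_n) S k (x : 'rV[F]_n) c :
  (x *m kkt_mx M S k) 0 c =
  if c == k then \sum_j x 0 j
  else if c \in S then (x *m M) 0 c - (x *m M) 0 k else x 0 c.
Proof.
rewrite mxE; under eq_bigr do rewrite mxE.
case: eqP => _; first by under eq_bigr do rewrite mulr1.
case: (c \in S); first by rewrite !mxE -sumrB; under eq_bigr do rewrite mulrBr.
rewrite (bigD1 c) //= eqxx mulr1 big1 ?addr0 // => j /negbTE ->.
by rewrite mulr0.
Qed.

Lemma map_kkt_point (F K : fieldType) (f : {rmorphism F -> K}) n (M : 'M[F]_n) S k :
  map_mx f (kkt_point M S k) = kkt_point (map_mx f M) S k.
Proof.
have fN : map_mx f (kkt_mx M S k) = kkt_mx (map_mx f M) S k.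
  apply/matrixP => r c; rewrite !mxE.
  by case: (c == k); case: (c \in S); rewrite ?rmorph1 ?rmorphB ?mxE ?rmorph_nat.
by rewrite map_mxM map_delta_mx map_invmx fN.
Qed.

Section Simplex.
Variables (R : realType) (d : nat).
Local Notation n := d.+1.
Local Notation vec := 'rV[R]_n.
Implicit Types (x y v w : vec) (S : {set 'I_n}).

Definition supp y : {set 'I_n} := [set j | 0 < y 0 j].

Definition tangent S v := (forall j, j \notin S -> v 0 j = 0) /\ \sum_j v 0 j = 0.

Lemma sum_coordD x y : \sum_j (x + y) 0 j = \sum_j x 0 j + \sum_j y 0 j.
Proof. by rewrite -big_split; apply: eq_bigr => j _; rewrite mxE. Qed.

Lemma sum_coordZ a v : \sum_j (a *: v) 0 j = a * \sum_j v 0 j.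
Proof. by rewrite mulr_sumr; apply: eq_bigr => j _; rewrite mxE. Qed.

Lemma sum_coordN v : \sum_j (- v) 0 j = - \sum_j v 0 j.
Proof. by rewrite -scaleN1r sum_coordZ mulN1r. Qed.

Lemma tangentN S v : tangent S v -> tangent S (- v).
Proof.
move=> [voff vs]; split=> [j /voff vj|]; first by rewrite mxE vj oppr0.
by rewrite sum_coordN vs oppr0.
Qed.

Lemma tangent_neg_coord S v : tangent S v -> v != 0 -> exists j, v 0 j < 0.
Proof.
move=> [_ vs] vn0; have [j vj|vpos] := pickP (fun j => v 0 j < 0); first by exists j.
case/eqP: vn0; apply/rowP => j; rewrite mxE.
by apply: (psumr_eq0P _ vs) => // i _; rewrite leNgt vpos.
Qed.

Lemma simplex_supp_neq0 y : in_simplex y -> exists k, k \in supp y.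
Proof.
move=> [ys yp]; apply: NNPP => nsupp; move: ys; rewrite big1 => [/eqP|j _].
  by rewrite eq_sym oner_eq0.
apply/eqP; rewrite eq_le yp andbT leNgt; apply/negP => yj.
by apply: nsupp; exists j; rewrite inE.
Qed.

Lemma simplex_off_supp y j : in_simplex y -> j \notin supp y -> y 0 j = 0.
Proof. by move=> [_ yp]; rewrite inE -leNgt => yj; apply/eqP; rewrite eq_le yj yp. Qed.

Lemma simplex_vertex (k : 'I_n) : in_simplex (delta_mx 0 k : vec).
Proof.
split=> [|j]; last by rewrite mxE ler0n.
rewrite (bigD1 k) //= big1 => [|j /negbTE jk]; rewrite mxE ?eqxx ?jk ?andbF //.
by rewrite addr0.
Qed.

Lemma simplex_ray_exit y w : in_simplex y -> tangent (supp y) w -> w != 0 ->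
  exists2 t, 0 < t & (forall s, 0 <= s <= t -> in_simplex (y + s *: w)) /\
                     (#|supp (y + t *: w)| < #|supp y|)%N.
Proof.
move=> ys [woff ws] wn0; have [ysum yp] := ys.
have [j0 wj0] := tangent_neg_coord (conj woff ws) wn0.
case: (arg_minP (P := fun j => w 0 j < 0) (fun j => y 0 j / - w 0 j) wj0) => jm wjm jm_min.
have yjm : 0 < y 0 jm.
  have : jm \in supp y by apply: contraLR wjm => /woff ->; rewrite ltxx.
  by rewrite inE.
pose t := y 0 jm / - w 0 jm.
have t_le j : w 0 j < 0 -> t * - w 0 j <= y 0 j.
  by move=> wj; rewrite -ler_pdivlMr ?oppr_gt0 //; apply: jm_min.
exists t; first by rewrite divr_gt0 ?oppr_gt0.
split=> [s /andP[s0 st]|].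
  split=> [|j]; first by rewrite sum_coordD sum_coordZ ysum ws mulr0 addr0.
  rewrite !mxE; have [wj|wj] := ltP (w 0 j) 0; last by have := yp j; nra.
  by have := t_le j wj; nra.
apply: proper_card; apply/properP; split.
  apply/subsetP => j; rewrite !inE !mxE; apply: contraTT => yj.
  by rewrite woff ?inE // mulr0 addr0.
exists jm; rewrite !inE // !mxE -leNgt.
by rewrite /t invrN mulrN mulNr mulfVK ?subrr // lt_eqF.
Qed.

Lemma simplex_tangent_step y v : in_simplex y -> tangent (supp y) v ->
  exists2 t, 0 < t & forall s, `|s| <= t -> in_simplex (y + s *: v).
Proof.
move=> ys tv; have [->|vn0] := eqVneq v 0.
  by exists 1 => // s _; rewrite scaler0 addr0.
have [t1 t1p [step1 _]] := simplex_ray_exit ys tv vn0.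
have Nvn0 : - v != 0 by rewrite oppr_eq0.
have [t2 t2p [step2 _]] := simplex_ray_exit ys (tangentN tv) Nvn0.
exists (Num.min t1 t2) => [|s]; first by rewrite lt_min t1p.
rewrite le_min => /andP[st1 st2]; have [s0|s0] := leP 0 s.
  by apply: step1; rewrite s0 -(ger0_norm s0).
rewrite -[s]opprK scaleNr -scalerN; apply: step2.
by rewrite -(ltr0_norm s0) st2 normr_ge0.
Qed.

Lemma simplex_midpoint (a b : vec) :
  in_simplex a -> in_simplex b -> in_simplex (a + 2^-1 *: (b - a)).
Proof.
move=> [asum apos] [bsum bpos]; split=> [|j].
  by rewrite sum_coordD sum_coordZ sum_coordD sum_coordN asum bsum subrr mulr0 addr0.
by rewrite !mxE; have := apos j; have := bpos j; lra.
Qed.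

Lemma simplex_midpoint_pos (a b : vec) j : in_simplex a -> in_simplex b ->
  0 < a 0 j \/ 0 < b 0 j -> 0 < (a + 2^-1 *: (b - a)) 0 j.
Proof.
move=> [_ apos] [_ bpos] abj; rewrite !mxE; have := apos j; have := bpos j.
by case: abj; lra.
Qed.

Definition simplexb x := (\sum_j x 0 j == 1) && [forall j, 0 <= x 0 j].

Lemma simplexP x : reflect (in_simplex x) (simplexb x).
Proof.
apply: (iffP andP) => [[/eqP xsum /forallP xpos] | [xsum xpos]]; first by split.
by split; [apply/eqP | apply/forallP].
Qed.

End Simplex.

Section QuadraticForm.
Variables (R : realType) (d : nat) (B : 'M[R]_d.+1).
Hypothesis B_sym : B^T = B.
Local Notation n := d.+1.
Local Notation vec := 'rV[R]_n.
Implicit Types (x y z u v w : vec) (S : {set 'I_n}).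

Definition bform x y := (x *m B *m y^T) 0 0.
Definition qform x := bform x x.

Lemma bformC x y : bform x y = bform y x.
Proof.
have tr (M : 'M[R]_1) : M 0 0 = M^T 0 0 by rewrite mxE.
by rewrite /bform tr !trmx_mul trmxK B_sym mulmxA.
Qed.

Lemma bformDl x y z : bform (x + y) z = bform x z + bform y z.
Proof. by rewrite /bform !mulmxDl [LHS]mxE. Qed.

Lemma bformZl a x y : bform (a *: x) y = a * bform x y.
Proof. by rewrite /bform -!scalemxAl [LHS]mxE. Qed.

Lemma bformBl x y z : bform (x - y) z = bform x z - bform y z.
Proof. by rewrite -scaleN1r bformDl bformZl mulN1r. Qed.

Lemma bformNr x y : bform x (- y) = - bform x y.
Proof. by rewrite bformC -scaleN1r bformZl mulN1r bformC. Qed.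

Lemma qformN v : qform (- v) = qform v.
Proof. by rewrite /qform bformNr bformC bformNr opprK. Qed.

Lemma qformDZ x u s :
  qform (x + s *: u) = qform x + 2 * s * bform x u + s ^+ 2 * qform u.
Proof.
rewrite /qform !bformDl !bformZl ![bform _ (_ + _)]bformC !bformDl !bformZl.
by rewrite [bform u x]bformC; ring.
Qed.

Lemma bform_sum x y : bform x y = \sum_j (x *m B) 0 j * y 0 j.
Proof. by rewrite /bform [LHS]mxE; apply: eq_bigr => j _; rewrite [y^T _ _]mxE. Qed.

Definition maximizer x := in_simplex x /\ forall y, in_simplex y -> qform y <= qform x.

Lemma maximizer_tangent x v : maximizer x -> tangent (supp x) v ->
  bform x v = 0 /\ qform v <= 0.
Proof.
move=> [xs xmax] tv; have [t t0 step] := simplex_tangent_step xs tv.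
apply: (quadratic_nonpos_near0 t0) => s /step /xmax.
by rewrite qformDZ; lra.
Qed.

Lemma interior_maximizer_concave x u : maximizer x -> (forall j, 0 < x 0 j) ->
  \sum_j u 0 j = 0 -> qform u <= 0.
Proof.
move=> xmax xpos us; apply: (maximizer_tangent xmax _).2.
by split=> // j; rewrite inE xpos.
Qed.

Lemma maximizer_midpoint (a b : vec) : (forall u, \sum_j u 0 j = 0 -> qform u <= 0) ->
  maximizer a -> maximizer b -> maximizer (a + 2^-1 *: (b - a)).
Proof.
move=> concave [aS amax] [bS bmax]; split=> [|y ys]; first exact: simplex_midpoint.
apply: le_trans (amax y ys) _; have := amax _ bS; have := bmax _ aS.
have -> : b = a + 1 *: (b - a) by rewrite scale1r addrC subrK.
rewrite !qformDZ expr1n !mulr1 -[a + _ - a]addrAC subrr add0r scale1r.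
have := concave (b - a); rewrite sum_coordD sum_coordN aS.1 bS.1 subrr => /(_ erefl).
have -> : (2^-1 : R) ^+ 2 = 4^-1 by rewrite exprVn -natrX.
lra.
Qed.

Definition neg_def_on S := forall v, tangent S v -> 0 <= qform v -> v = 0.

Lemma kkt_mx_solve S k x a : k \in S -> x *m kkt_mx B S k = a *: delta_mx 0 k ->
  [/\ forall j, j \notin S -> x 0 j = 0, \sum_j x 0 j = a &
      forall u, tangent S u -> bform x u = 0].
Proof.
move=> kS hx.
have entry c : (if c == k then \sum_j x 0 j
    else if c \in S then (x *m B) 0 c - (x *m B) 0 k else x 0 c) = a * (c == k)%:R.
  by rewrite -kkt_mxE hx !mxE eqxx.
have crit c : c \in S -> (x *m B) 0 c = (x *m B) 0 k.
  move=> cS; have [-> //|ck] := eqVneq c k.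
  by apply/eqP; rewrite -subr_eq0; have := entry c; rewrite (negbTE ck) cS mulr0 => ->.
split=> [j jS | | u [uoff usum]].
- have jk : j != k by apply: contraNneq jS => ->.
  by have := entry j; rewrite (negbTE jk) (negbTE jS) mulr0.
- by have := entry k; rewrite eqxx mulr1.
- rewrite bform_sum (eq_bigr (fun j => (x *m B) 0 k * u 0 j)) -?mulr_sumr ?usum ?mulr0 //.
  by move=> j _; have [/crit -> // | /uoff ->] := boolP (j \in S); rewrite !mulr0.
Qed.

Lemma kkt_mx_unit S k : k \in S -> neg_def_on S -> kkt_mx B S k \in unitmx.
Proof.
move=> kS negdef; rewrite unitmxE unitfE; apply/det0P => -[v vn0 hv].
have [voff vsum vcrit] := kkt_mx_solve kS (etrans hv (esym (scale0r _))).
by case/eqP: vn0; apply: (negdef _ (conj voff vsum)); rewrite /qform vcrit.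
Qed.

Lemma kkt_point_crit S k : k \in S -> neg_def_on S ->
  [/\ forall j, j \notin S -> kkt_point B S k 0 j = 0, \sum_j kkt_point B S k 0 j = 1 &
      forall u, tangent S u -> bform (kkt_point B S k) u = 0].
Proof.
move=> kS negdef; apply: (kkt_mx_solve (k := k)) => //.
by rewrite /kkt_point mulmxKV ?kkt_mx_unit ?scale1r.
Qed.

Lemma kkt_sub_tangent y k : in_simplex y -> k \in supp y -> neg_def_on (supp y) ->
  tangent (supp y) (kkt_point B (supp y) k - y).
Proof.
move=> ys ky negdef; have [coff csum _] := kkt_point_crit ky negdef.
split=> [j jy|]; first by rewrite mxE [(- y) 0 j]mxE coff // simplex_off_supp ?subrr.
by rewrite sum_coordD sum_coordN csum ys.1 subrr.
Qed.

Lemma neg_def_maximizer_kkt y k : maximizer y -> neg_def_on (supp y) -> k \in supp y ->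
  kkt_point B (supp y) k = y.
Proof.
move=> ymax negdef ky; have [_ _ ccrit] := kkt_point_crit ky negdef.
have tw := kkt_sub_tangent ymax.1 ky negdef.
have [yw _] := maximizer_tangent ymax tw.
apply/eqP; rewrite -subr_eq0; apply/eqP; apply: (negdef _ (tw)).
by rewrite /qform bformBl ccrit // yw subrr.
Qed.

Definition improves i y z :=
  [/\ in_simplex z, qform y <= qform z & (maximizer y -> 0 < y 0 i -> 0 < z 0 i)].

Lemma improves_trans i y z w : improves i y z -> improves i z w -> improves i y w.
Proof.
move=> [zs yz yzi] [ws zw zwi]; split=> //; first exact: le_trans zw.
move=> ymax yi; apply: zwi (yzi ymax yi).
by split=> // u us; apply: le_trans (ymax.2 u us) yz.
Qed.

Lemma neg_def_step i y k : in_simplex y -> k \in supp y -> neg_def_on (supp y) ->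
  improves i y (kkt_point B (supp y) k) \/
  exists2 z, improves i y z & (#|supp z| < #|supp y|)%N.
Proof.
move=> ys ky negdef; have [_ csum ccrit] := kkt_point_crit ky negdef.
have tw := kkt_sub_tangent ys ky negdef.
set c := kkt_point B _ k in csum ccrit tw *; set w := c - y in tw.
have ray s : qform (y + s *: w) = qform c + (s - 1) ^+ 2 * qform w.
  have -> : y + s *: w = c + (s - 1) *: w by apply/rowP => j; rewrite /w !mxE; ring.
  by rewrite qformDZ ccrit // mulr0 addr0.
have qw : qform w <= 0.
  rewrite leNgt; apply/negP => qw_pos; move: (qw_pos).
  by rewrite (negdef w tw (ltW qw_pos)) /qform /bform !mul0mx mxE ltxx.
have qy : qform y = qform c + qform w.
  by have := ray 0; rewrite scale0r addr0 sub0r sqrrN expr1n mul1r.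
have [cs|cns] := classic (in_simplex c).
  left; split=> //; first by rewrite qy; lra.
  by move=> ymax; rewrite /c neg_def_maximizer_kkt.
right; have [j cj] : exists j, c 0 j < 0.
  apply: NNPP => cpos; apply: cns; split=> // j; rewrite leNgt; apply/negP => cj.
  by apply: cpos; exists j.
have wn0 : w != 0.
  by apply/eqP => /eqP; rewrite subr_eq0 => /eqP cy; apply: cns; rewrite cy.
have [t t0 [step lt_supp]] := simplex_ray_exit ys tw wn0.
have zs : in_simplex (y + t *: w) by apply: step; rewrite lexx ltW.
have t_lt1 : t < 1.
  have := zs.2 j; rewrite mxE [(t *: w) 0 j]mxE /w mxE [(- y) 0 j]mxE.
  by have := ys.2 j; nra.
exists (y + t *: w) => //; split=> //.
  have sq_le1 : (t - 1) ^+ 2 <= 1 by nra.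
  by rewrite ray qy; nra.
by move=> ymax; case: cns; rewrite /c neg_def_maximizer_kkt //; case: ymax.
Qed.

Lemma indef_step i y : in_simplex y -> ~ neg_def_on (supp y) ->
  exists2 z, improves i y z & (#|supp z| < #|supp y|)%N.
Proof.
move=> ys indef.
have [v [tv qv vn0]] : exists v, [/\ tangent (supp y) v, 0 <= qform v & v != 0].
  apply: NNPP => nov; apply: indef => v tv qv; apply: NNPP => vn0.
  by apply: nov; exists v; split=> //; apply/eqP.
have tNv := tangentN tv; have qNv : 0 <= qform (- v) by rewrite qformN.
have Nvn0 : - v != 0 by rewrite oppr_eq0.
have [w [[tw qw wn0] [yw wi]]] : exists w, [/\ tangent (supp y) w, 0 <= qform w & w != 0] /\
    0 <= bform y w /\ (bform y w = 0 -> 0 <= w 0 i).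
  have [yv_lt0|yv_gt0|yv0] := ltgtP (bform y v) 0.
  - by exists (- v); rewrite bformNr; do 2!split=> //; lra.
  - by exists v; do 2!split=> //; lra.
  - have [vi|vi] := leP 0 (v 0 i); first by exists v; rewrite yv0.
    by exists (- v); rewrite bformNr yv0 oppr0 mxE; do 2!split=> //; lra.
have [t t0 [step lt_supp]] := simplex_ray_exit ys tw wn0.
exists (y + t *: w) => //; split.
- by apply: step; rewrite lexx ltW.
- by rewrite qformDZ; have := mulr_ge0 (ltW t0) yw; have := mulr_ge0 (sqr_ge0 t) qw; lra.
- move=> ymax yi; have := wi (maximizer_tangent ymax tw).1.
  by rewrite !mxE; have := ltW t0; nra.
Qed.

Lemma kkt_descent i y : in_simplex y -> exists S k, improves i y (kkt_point B S k).
Proof.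
have [m lt_ym] := ubnP #|supp y|; elim: m => // m IH in y lt_ym *; move=> ys.
have [k ky] := simplex_supp_neq0 ys.
have [yc | [z yz lt_zy]] : improves i y (kkt_point B (supp y) k) \/
    exists2 z, improves i y z & (#|supp z| < #|supp y|)%N.
- have [negdef|indef] := classic (neg_def_on (supp y)); first exact: neg_def_step.
  by right; apply: indef_step.
- by exists (supp y), k.
have [zs _ _] := yz; have [S [k' zc]] := IH z (leq_trans lt_zy (ltnSE lt_ym)) zs.
by exists S, k'; apply: improves_trans zc.
Qed.

Lemma kkt_maximizer : exists S k, maximizer (kkt_point B S k).
Proof.
pose cand (p : {set 'I_n} * 'I_n) := kkt_point B p.1 p.2.
have [S0 [k0 [c0s _ _]]] := kkt_descent ord0 (simplex_vertex R ord0).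
case: (arg_maxP (P := fun p => simplexb (cand p)) (fun p => qform (cand p))
  (introT (simplexP (cand (S0, k0))) c0s)) => -[S k] /simplexP cs cmax.
exists S, k; split=> // y ys; have [S' [k' [c's yc' _]]] := kkt_descent ord0 ys.
exact: le_trans yc' (cmax (S', k') (introT (simplexP _) c's)).
Qed.

Lemma kkt_maximizer_pos x i : maximizer x -> 0 < x 0 i ->
  exists S k, maximizer (kkt_point B S k) /\ 0 < kkt_point B S k 0 i.
Proof.
move=> xmax xi; have [S [k [cs xc ci]]] := kkt_descent i xmax.1.
exists S, k; split; last exact: ci xmax xi.
by split=> // y ys; apply: le_trans (xmax.2 y ys) xc.
Qed.

End QuadraticForm.

Section RationalMatrix.
Variables (R : realType) (d : nat) (A : 'M[rat]_d.+1).
Hypothesis A_sym : A^T = A.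
Local Notation n := d.+1.
Local Notation B := (map_mx (@ratr R) A).

Lemma map_ratr_sym : B^T = B.
Proof. by rewrite map_trmx A_sym. Qed.

Lemma ler_qf y z : (qf A y <= qf A z) = (qform B y <= qform B z).
Proof. by rewrite /qf ler_pM2l // invr_gt0 ltr0n. Qed.

Lemma ratpt_kkt S k : ratpt R (kkt_point A S k) = kkt_point B S k.
Proof. exact: map_kkt_point. Qed.

Lemma ratpt_midpoint (p q : 'rV[rat]_n) :
  ratpt R (p + 2^-1 *: (q - p)) = ratpt R p + 2^-1 *: (ratpt R q - ratpt R p).
Proof. by rewrite /ratpt map_mxD map_mxZ map_mxB fmorphV rmorph_nat. Qed.

Lemma rat_maximizer : exists q : 'rV[rat]_n, in_simplex (ratpt R q) /\
  forall y : 'rV[R]_n, in_simplex y -> qf A y <= qf A (ratpt R q).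
Proof.
have [S [k [cs cmax]]] := kkt_maximizer map_ratr_sym.
by exists (kkt_point A S k); rewrite ratpt_kkt; split=> // y ys; rewrite ler_qf cmax.
Qed.

Lemma rat_interior_maximizer :
  (exists x : 'rV[R]_n, in_simplex_int x /\ forall y, in_simplex y -> qf A y <= qf A x) ->
  exists q : 'rV[rat]_n, in_simplex_int (ratpt R q) /\
    forall y, in_simplex y -> qf A y <= qf A (ratpt R q).
Proof.
case=> x [[xsum xpos] xmax_qf].
have xmax : maximizer B x.
  by split=> [|y ys]; [split=> // j; apply: ltW | rewrite -ler_qf xmax_qf].
have concave := interior_maximizer_concave map_ratr_sym xmax xpos.
have rat_max_pos (j : 'I_n) : exists q, maximizer B (ratpt R q) /\ 0 < ratpt R q 0 j.
  have [S [k [cmax cj]]] := kkt_maximizer_pos map_ratr_sym xmax (xpos j).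
  by exists (kkt_point A S k); rewrite ratpt_kkt.
have pos_upto m : (m <= n)%N ->
    exists q, maximizer B (ratpt R q) /\ forall j : 'I_n, (j < m)%N -> 0 < ratpt R q 0 j.
  elim: m => [_|m IH lt_mn]; first by have [q [qmax _]] := rat_max_pos ord0; exists q.
  have [p [pmax ppos]] := IH (ltnW lt_mn).
  have [q [qmax qm]] := rat_max_pos (Ordinal lt_mn).
  exists (p + 2^-1 *: (q - p)); rewrite ratpt_midpoint.
  split=> [|j lt_jm]; first exact: (maximizer_midpoint map_ratr_sym concave pmax qmax).
  apply: (simplex_midpoint_pos pmax.1 qmax.1).
  move: lt_jm; rewrite ltnS leq_eqVlt => /orP[/eqP jm | /ppos pj]; [right | by left].
  by have -> : j = Ordinal lt_mn by apply: val_inj.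
have [q [[[qsum _] qmax] qpos]] := pos_upto n (leqnn n).
exists q; split=> [|y ys]; first by split=> // j; apply: qpos.
by rewrite ler_qf qmax.
Qed.

End RationalMatrix.

Lemma qfN (R : realType) (d : nat) (A : 'M[rat]_d.+1) (x : 'rV[R]_d.+1) :
  qf (- A) x = - qf A x.
Proof. by rewrite /qf map_mxN mulmxN mulNmx mxE mulrN. Qed.

Theorem lemma3p1 (R : realType) (d : nat) (A : 'M[rat]_(d.+1)) (hA : A^T = A) :
  (* (a) maximum and minimum attained at rational points *)
  ((exists q : 'rV[rat]_(d.+1), in_simplex (ratpt R q) /\
      forall y : 'rV[R]_(d.+1), in_simplex y -> qf A y <= qf A (ratpt R q)) /\
   (exists q : 'rV[rat]_(d.+1), in_simplex (ratpt R q) /\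
      forall y : 'rV[R]_(d.+1), in_simplex y -> qf A (ratpt R q) <= qf A y)) /\
  (* (b) interior maximizer / minimizer can be chosen rational *)
  (((exists x : 'rV[R]_(d.+1), in_simplex_int x /\
       forall y, in_simplex y -> qf A y <= qf A x) ->
    exists q : 'rV[rat]_(d.+1), in_simplex_int (ratpt R q) /\
       forall y, in_simplex y -> qf A y <= qf A (ratpt R q)) /\
   ((exists x : 'rV[R]_(d.+1), in_simplex_int x /\
       forall y, in_simplex y -> qf A x <= qf A y) ->
    exists q : 'rV[rat]_(d.+1), in_simplex_int (ratpt R q) /\
       forall y, in_simplex y -> qf A (ratpt R q) <= qf A y)).
Proof.
have NA_sym : (- A)^T = - A by rewrite linearN /= hA.
have qfN_le y z : (qf (- A) y <= qf (- A) z) = (qf A z <= qf A y) by rewrite !qfN lerN2.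
split; split.
- exact: rat_maximizer.
- have [q [qs qmin]] := @rat_maximizer R d (- A) NA_sym.
  by exists q; split=> // y ys; rewrite -qfN_le qmin.
- exact: rat_interior_maximizer.
- case=> x [xs xmin]; have [|q [qs qmin]] := @rat_interior_maximizer R d (- A) NA_sym.
    by exists x; split=> // y ys; rewrite qfN_le xmin.
  by exists q; split=> // y ys; rewrite -qfN_le qmin.
Qed.
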